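(* Let $m,p,n$ be positive integers with $p\mid m$, $n>1$, let $G=G(m,p,n)$ act on $\mathbb D^n$, and let $\mathcal H$ be an analytic Hilbert module on $\mathbb D^n$ over $\mathbb C[z_1,\ldots,z_n]$ with a $G$-invariant reproducing kernel. (1) If the multiplication operators $M_{z_1},\ldots,M_{z_n}$ by the coordinate functions on $\mathcal H$ are contractions and satisfy von Neumann's inequality for all $G$-invariant polynomials (i.e. $\|q(M_{z_1},\dots,M_{z_n})\|\le\sup_{\overline{\mathbb D}^n}|q|$ for every $G$-invariant $q$), then for every $\varrho\in\widehat G$ and $1\le i\le\deg\varrho$ the commuting $n$-tuple of restrictions $(M_{\theta_1},\ldots,M_{\theta_n})|_{\mathbb P_\varrho^{ii}\mathcal H}$ is a $\boldsymbol\Theta_n$-contraction. (2) Consequently, at least $\sum_{\varrho\in\widehat G}\deg\varrho$ $\boldsymbol\Theta_n$-contractions arise from $(M_{z_1},\ldots,M_{z_n})$ in this way.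
   Context: $G(m,p,n)$ is the group of $n\times n$ monomial matrices with nonzero entries $m$-th roots of unity whose product is an $(m/p)$-th root of unity, acting by $\sigma\cdot z=\sigma^{-1}z$. $\theta_i(z)=s_i(z_1^m,\ldots,z_n^m)$ for $1\le i\le n-1$ ($s_i$ elementary symmetric), $\theta_n(z)=(z_1\cdots z_n)^{m/p}$, $\boldsymbol\Theta_n=\boldsymbol\theta(\mathbb D^n)$; a $\boldsymbol\Theta_n$-contraction is a commuting tuple $T$ with $\|f(T)\|\le\sup_{\boldsymbol\theta(\overline{\mathbb D}^n)}|f|$ for all polynomials $f$. An analytic Hilbert module on $\mathbb D^n$ is a Hilbert space of holomorphic functions on $\mathbb D^n$ with a reproducing kernel $K$, in which polynomials are dense and on which polynomials act boundedly by multiplication. $K$ is $G$-invariant if $K(\sigma\cdot z,\sigma\cdot w)=K(z,w)$ for all $\sigma\in G$. $\widehat G$ is the set of equivalence classes of irreducible representations of $G$. For $\varrho\in\widehat G$ fix a unitary representation $\pi_\varrho$ in the class $\varrho$ with matrix entries $\pi_\varrho^{ij}(\sigma)$ with respect to an orthonormal basis of $\mathbb C^{\deg\varrho}$, and define $(\mathbb P_\varrho^{ij}f)(z)=\frac{\deg\varrho}{|G|}\sum_{\sigma\in G}\pi_\varrho^{ji}(\sigma^{-1})f(\sigma^{-1}\cdot z)$. *)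

From HB Require Import structures.
From mathcomp Require Import all_boot all_order all_algebra all_fingroup all_field all_character.
From mathcomp Require Import reals complex.
From mathcomp Require mpoly.
Set Implicit Arguments.
Unset Strict Implicit.
Unset Printing Implicit Defensive.
Import GRing.Theory Num.Theory.
Local Open Scope ring_scope.

(* The group G(m,p,n), realised faithfully as a permutation group.     *)
(* A monomial matrix with m-th roots of unity as nonzero entries is     *)
(* encoded as a permutation of the "points" (j, a) : 'I_n * 'I_m,       *)
(* where (j, a) stands for the vector zeta^a e_j; such permutations are *)
(* exactly those commuting with the shift (j, a) |-> (j, a+1 mod m).    *)
(* (The type 'I_m.-1.+1 is 'I_m for m > 0, and has ord0.)               *)

Definition pt (n m : nat) := ('I_n * 'I_m.-1.+1)%type.

Definition shift_fun (n m : nat) (x : pt n m) : pt n m := (x.1, ordS x.2).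

Lemma shift_fun_inj n m : injective (@shift_fun n m).
Proof.
move=> [j a] [k b] E; case: E => -> E; congr pair; apply: ordS_inj; exact: val_inj.
Qed.

Definition shift (n m : nat) : {perm pt n m} := perm (@shift_fun_inj n m).

(* G(m,p,n): elements of the centraliser of the shift (= the monomial
   matrices with m-th roots of unity entries, i.e. G(m,1,n)) whose product
   of nonzero entries is an (m/p)-th root of unity, i.e. whose exponent sum
   is divisible by p.  This set is already a group; <<_>> just equips it
   with its canonical {group} structure. *)
Definition Gset (m p n : nat) : {set {perm pt n m}} :=
  [set g in ('C[shift n m])%g |
     (p %| \sum_(j < n) nat_of_ord (g (j, ord0)).2)%N].

Definition Gmpn (m p n : nat) : {group {perm pt n m}} := (<< Gset m p n >>)%G.

Section Analytic.
Variable R : realType.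
Local Notation C := R[i].
Variables (m p n : nat) (zeta : C).

Local Notation vec := 'cV[C]_n.
Local Notation fn := (vec -> C).
Local Notation G := (Gmpn m p n).

(* The monomial matrix of g (a group homomorphism g |-> mono g): column j
   is zeta^a e_i where g^-1 (j, 0) = (i, a). *)
Definition mono (g : {perm pt n m}) : 'M[C]_n :=
  \matrix_(i < n, j < n)
    (let x := ((g^-1)%g (j, ord0)) in if x.1 == i then zeta ^+ x.2 else 0).

Definition act (g : {perm pt n m}) (z : vec) : vec := invmx (mono g) *m z.

Definition inD (z : vec) : bool := [forall i, `|z i 0| < 1].
Definition inDbar (z : vec) : bool := [forall i, `|z i 0| <= 1].

Definition coords (z : vec) : 'I_n -> C := fun i => z i 0.

(* polynomial function restricted to D^n (functions on D^n are represented
   by functions on C^n vanishing outside D^n) *)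
Definition polyfun (q : mpoly.mpoly n C) : fn :=
  fun z => if inD z then mpoly.meval (coords z) q else 0.

Definition continuous_on_D (f : fn) : Prop :=
  forall z, inD z -> forall eps : C, 0 < eps ->
    exists2 del : C, 0 < del &
      forall w, inD w -> (forall i, `|w i 0 - z i 0| < del) -> `|f w - f z| < eps.

Definition partial_holo_on_D (f : fn) : Prop :=
  forall z, inD z -> forall j : 'I_n, exists L : C, forall eps : C, 0 < eps ->
    exists2 del : C, 0 < del &
      forall h : C, 0 < `|h| < del ->
        `|(f (z + h *: delta_mx j 0) - f z) / h - L| < eps.

Definition holomorphic_on_D (f : fn) : Prop :=
  continuous_on_D f /\ partial_holo_on_D f.

Definition nrm (ip : fn -> fn -> C) (f : fn) : C := sqrtC (ip f f).

Definition fsub (f g : fn) : fn := fun z => f z - g z.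

Definition kern (K : vec -> vec -> C) (w : vec) : fn :=
  fun z => if inD z then K z w else 0.

Definition polymul (q : mpoly.mpoly n C) (f : fn) : fn :=
  fun z => mpoly.meval (coords z) q * f z.

Record analytic_hilbert_module (H : fn -> Prop) (ip : fn -> fn -> C)
    (K : vec -> vec -> C) : Prop := {
  ahm_0 : H (fun _ => 0);
  ahm_add : forall f g, H f -> H g -> H (fun z => f z + g z);
  ahm_scale : forall (a : C) f, H f -> H (fun z => a * f z);
  ahm_supp : forall f, H f -> forall z, ~~ inD z -> f z = 0;
  ahm_holo : forall f, H f -> holomorphic_on_D f;
  ahm_ip_lin : forall (a : C) f g h, H f -> H g -> H h ->
      ip (fun z => a * f z + g z) h = a * ip f h + ip g h;
  ahm_ip_herm : forall f g, H f -> H g -> ip g f = (ip f g)^*;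
  ahm_ip_pos : forall f, H f -> 0 <= ip f f;
  ahm_ip_def : forall f, H f -> ip f f = 0 -> forall z, f z = 0;
  ahm_complete : forall u : nat -> fn, (forall k, H (u k)) ->
      (forall eps : C, 0 < eps -> exists N, forall k l, (N <= k)%N -> (N <= l)%N ->
          nrm ip (fsub (u k) (u l)) < eps) ->
      exists2 f, H f & forall eps : C, 0 < eps -> exists N, forall k, (N <= k)%N ->
          nrm ip (fsub (u k) f) < eps;
  ahm_kern : forall w, inD w -> H (kern K w);
  ahm_repr : forall w, inD w -> forall f, H f -> ip f (kern K w) = f w;
  ahm_poly : forall q, H (polyfun q);
  ahm_dense : forall f, H f -> forall eps : C, 0 < eps ->
      exists q, nrm ip (fsub f (polyfun q)) < eps;
  ahm_mul : forall q f, H f -> H (polymul q f);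
  ahm_mul_bdd : forall q, exists c : C, forall f, H f ->
      nrm ip (polymul q f) <= c * nrm ip f
}.

Definition G_invariant_kernel (K : vec -> vec -> C) : Prop :=
  forall g, g \in G -> forall z w, inD z -> inD w -> K (act g z) (act g w) = K z w.

Definition G_invariant_poly (q : mpoly.mpoly n C) : Prop :=
  forall g, g \in G -> forall z, mpoly.meval (coords (act g z)) q = mpoly.meval (coords z) q.

Definition Tmon (a : mpoly.multinom n) (T : 'I_n -> fn -> fn) : fn -> fn :=
  foldr (fun i F => (iter (mpoly.fun_of_multinom a i) (T i)) \o F) id (enum 'I_n).

Definition polyop (q : mpoly.mpoly n C) (T : 'I_n -> fn -> fn) (f : fn) : fn :=
  fun z => \sum_(a <- mpoly.msupp q) mpoly.mcoeff a q * Tmon a T f z.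

Definition Mop (phi : vec -> C) (f : fn) : fn := fun z => phi z * f z.
Definition Mz (i : 'I_n) : fn -> fn := Mop (fun z => z i 0).

Definition esym (k : nat) (x : 'I_n -> C) : C :=
  \sum_(A : {set 'I_n} | #|A| == k) \prod_(j in A) x j.

(* theta = (theta_1, ..., theta_n), indices shifted to 0-based *)
Definition theta (z : vec) : 'I_n -> C := fun i =>
  if (i.+1 < n)%N then esym i.+1 (fun j => z j 0 ^+ m)
  else (\prod_(j < n) z j 0) ^+ (m %/ p).

Definition Mtheta (i : 'I_n) : fn -> fn := Mop (fun z => theta z i).

(* Theta_n-contraction: a commuting tuple of operators on the subspace S
   (S invariant, so that the restrictions make sense) with
   ||q(T)|| <= sup_{theta(closed D^n)} |q| for all polynomials q,
   written with an arbitrary upper bound c of |q| on theta(closed D^n). *)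
Definition Theta_contraction (ip : fn -> fn -> C) (S : fn -> Prop)
    (T : 'I_n -> fn -> fn) : Prop :=
  [/\ forall i f, S f -> S (T i f),
      forall i j f, S f -> T i (T j f) = T j (T i f) &
      forall (q : mpoly.mpoly n C) (c : C),
        (forall w, inDbar w -> `|mpoly.meval (theta w) q| <= c) ->
        forall f, S f -> nrm ip (polyop q T f) <= c * nrm ip f].

Definition unitary_rep d (rG : mx_representation C G d) : Prop :=
  forall g, g \in G -> rG g *m (map_mx (@Num.conj_op _) (rG g))^T = 1%:M.

Definition Pproj d (rG : mx_representation C G d) (i j : 'I_d) (f : fn) : fn :=
  fun z => (d%:R / (#|G|)%:R) *
    \sum_(g in G) rG (g^-1)%g j i * f (act (g^-1)%g z).

Definition Prange (H : fn -> Prop) d (rG : mx_representation C G d) (i j : 'I_d)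
  : fn -> Prop := fun f => exists2 g, H g & f = Pproj rG i j g.

End Analytic.

From Pilot Require Import Defs.
From HB Require Import structures.
From mathcomp Require Import all_boot all_order all_algebra all_fingroup all_field all_character.
From mathcomp Require Import reals complex.
From mathcomp Require Import boolp.
From mathcomp Require mpoly.
From mathcomp Require Import ring lra.
Set Implicit Arguments.
Unset Strict Implicit.
Unset Printing Implicit Defensive.
Import Order.TTheory GRing.Theory Num.Theory.
Local Open Scope ring_scope.

(* Each theta_i is G-invariant, and q o theta has the same supremum over the
   closed polydisc as q has over theta of it.  Hence on any subspace of H that
   is invariant under the M_theta_i, q(M_theta) = (q o theta)(M_z) is covered by
   von Neumann's inequality for the G-invariant polynomial q o theta.  The range
   of P^{ii} is such a subspace because M_theta commutes with P^{ii} and H is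
   closed under f |-> f o sigma for sigma in G.  This last fact is where the
   G-invariance of the kernel enters: composition with sigma is isometric on
   finite combinations of kernel functions, so near-best approximants of u by
   such combinations transport to a Cauchy sequence, whose limit is u o sigma
   by the reproducing property. *)

Section MonomialPermutations.
Variables (m p n : nat).
Hypotheses (m_gt0 : (0 < m)%N) (p_dvd_m : (p %| m)%N).
Local Notation sh := (shift n m).

Lemma iter_shift k (j : 'I_n) (a : 'I_m.-1.+1) : iter k sh (j, a) = (j, inZp (a + k)).
Proof.
elim: k => [|k IH]; first by congr pair; apply: val_inj; rewrite /= addn0 modn_small.
rewrite iterS IH permE; congr pair; apply: val_inj.
by rewrite /= -addn1 modnDml addn1 addnS.
Qed.

(* The point (j, a) encodes zeta^a e_j, so g in the centraliser of [sh] acts as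
   the monomial map e_j |-> zeta^(mexp g j) e_(mperm g j). *)
Definition mperm (g : {perm pt n m}) (j : 'I_n) : 'I_n := (g (j, ord0)).1.
Definition mexp (g : {perm pt n m}) (j : 'I_n) : nat := (g (j, ord0)).2.

Lemma cent_shiftE (g : {perm pt n m}) j a : g \in 'C[sh]%g ->
  g (j, a) = (mperm g j, inZp (mexp g j + a)).
Proof.
move/cent1P => cg.
have -> : (j, a) = (sh ^+ a)%g (j, ord0).
  rewrite permX iter_shift; congr pair; apply: val_inj => /=.
  by rewrite add0n modn_small.
rewrite -permM -(commuteX a cg) permM permX /mperm /mexp.
by case: (g (j, ord0)) => k b; rewrite iter_shift.
Qed.

Lemma mperm_inj (g : {perm pt n m}) : g \in 'C[sh]%g -> injective (mperm g).
Proof.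
move=> cg j k ejk; set M := m.-1.+1.
have lt_j : (mexp g j < M)%N by exact: ltn_ord.
pose t : 'I_M := inZp (mexp g k + M - mexp g j).
suff: g (j, t) = g (k, ord0) by move/perm_inj => [].
rewrite !cent_shiftE // ejk; congr pair; apply: val_inj => /=.
rewrite addn0 modnDmr addnBA; last by rewrite ltnW // ltn_addl.
by rewrite addKn -modnDmr modnn addn0.
Qed.

Lemma group_set_Gset : group_set (Gset m p n).
Proof.
apply/group_setP; split.
  rewrite inE group1 /=; apply/dvdnP; exists 0%N.
  by rewrite mul0n big1 // => j _; rewrite perm1.
move=> g h /setIdP [cg dg] /setIdP [ch dh]; rewrite inE groupM //=.
have gh_exp j : nat_of_ord ((g * h)%g (j, ord0)).2 = ((mexp h (mperm g j) + mexp g j) %% m.-1.+1)%N.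
  by rewrite permM (cent_shiftE _ _ cg) (cent_shiftE _ _ ch) /= addn0 modnDmr.
have p_dvd_M : (p %| m.-1.+1)%N by rewrite prednK.
rewrite (eq_bigr _ (fun j _ => gh_exp j)) /dvdn -(modn_dvdm _ p_dvd_M) modn_summ.
rewrite (modn_dvdm _ p_dvd_M) big_split /= -(reindex_inj (mperm_inj cg) (P := xpredT)).
exact: dvdn_add.
Qed.

Lemma mem_Gmpn (g : {perm pt n m}) : (g \in Gmpn m p n) = (g \in Gset m p n).
Proof. by rewrite /Gmpn /= gen_set_id //; exact: group_set_Gset. Qed.

Lemma Gmpn_cent (g : {perm pt n m}) : g \in Gmpn m p n -> g \in 'C[sh]%g.
Proof. by rewrite mem_Gmpn => /setIdP []. Qed.

Lemma Gmpn_dvd_mexp (g : {perm pt n m}) : g \in Gmpn m p n -> (p %| \sum_j mexp g j)%N.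
Proof. by rewrite mem_Gmpn => /setIdP []. Qed.

End MonomialPermutations.

Section MonomialAction.
Variables (R : realType) (m p n : nat) (zeta : R[i]).
Hypotheses (m_gt0 : (0 < m)%N) (p_dvd_m : (p %| m)%N)
  (zeta_prim : m.-primitive_root zeta).
Local Notation C := R[i].
Local Notation G := (Gmpn m p n).

Lemma zeta_neq0 : zeta != 0.
Proof.
apply/eqP => z0; move: (prim_expr_order zeta_prim); rewrite z0 expr0n.
by rewrite eqn0Ngt m_gt0 /= => /eqP; rewrite eq_sym oner_eq0.
Qed.

Lemma norm_zeta : `|zeta| = 1.
Proof.
apply/eqP; rewrite -(pexpr_eq1 m_gt0) //.
by rewrite -normrX (prim_expr_order zeta_prim) normr1.
Qed.

Lemma Gmpn_centV (g : {perm pt n m}) : g \in G -> (g^-1)%g \in 'C[shift n m]%g.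
Proof. by move=> gG; apply: (Gmpn_cent m_gt0 p_dvd_m); rewrite groupV. Qed.

Lemma mono_mulmxE (g : {perm pt n m}) (y : 'cV[C]_n) j : g \in G ->
  (mono zeta g *m y) (mperm (g^-1)%g j) 0 = zeta ^+ mexp (g^-1)%g j * y j 0.
Proof.
move=> gG; rewrite mxE (bigD1 j) //= mxE /= /mperm eqxx big1 ?addr0 // => k kj.
rewrite mxE /=; case: eqP => [/(mperm_inj (Gmpn_centV gG)) ekj|]; last by rewrite mul0r.
by rewrite ekj eqxx in kj.
Qed.

Lemma mono_unitmx (g : {perm pt n m}) : g \in G -> mono zeta g \in unitmx.
Proof.
move=> gG; set h := (g^-1)%g.
pose W : 'M[C]_n := \matrix_(i, j) if mperm h i == j then zeta^-1 ^+ mexp h i else 0.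
suff: W *m mono zeta g = 1%:M by case/mulmx1_unit.
apply/matrixP => j k; rewrite !mxE (bigD1 (mperm h j)) //= big1 ?addr0; last first.
  by move=> i ij; rewrite mxE eq_sym (negbTE ij) mul0r.
rewrite !mxE /= -/h eqxx; have [->|jk] := eqVneq j k.
  by rewrite eqxx exprVn mulVf // expf_neq0 // zeta_neq0.
case: eqP => [/(mperm_inj (Gmpn_centV gG)) ejk|]; last by rewrite mulr0.
by rewrite ejk eqxx in jk.
Qed.

Lemma esym_inj k (s : 'I_n -> 'I_n) (x : 'I_n -> C) :
  injective s -> Defs.esym k (x \o s) = Defs.esym k x.
Proof.
move=> s_inj; rewrite /Defs.esym [RHS](reindex_inj (imset_inj s_inj)) /=.
apply: eq_big => [A|A _]; first by rewrite card_imset.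
by rewrite big_imset //; move=> a b _ _; exact: s_inj.
Qed.

(* The coordinate permutation of [mono g] preserves the elementary symmetric
   functions of the m-th powers, and the product of the coordinates only picks
   up zeta to the exponent sum, a multiple of p. *)
Lemma theta_mono (g : {perm pt n m}) (y : 'cV[C]_n) : g \in G ->
  theta m p (mono zeta g *m y) = theta m p y.
Proof.
move=> gG; have gVG : (g^-1)%g \in G by rewrite groupV.
have s_inj := mperm_inj (Gmpn_centV gG).
have zetaX_m k : (zeta ^+ k) ^+ m = 1.
  by rewrite -exprM mulnC exprM (prim_expr_order zeta_prim) expr1n.
apply/funext => k; rewrite /theta; case: ifP => _.
  rewrite -(esym_inj _ _ s_inj); congr Defs.esym; apply/funext => j /=.
  by rewrite mono_mulmxE // exprMn zetaX_m mul1r.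
rewrite (reindex_inj s_inj) /=.
under eq_bigr => j _ do rewrite mono_mulmxE //.
rewrite big_split /= prodrXr exprMn.
have [t ->] := dvdnP (Gmpn_dvd_mexp m_gt0 p_dvd_m gVG).
by rewrite -exprM -mulnA (mulnC p) divnK // exprM zetaX_m mul1r.
Qed.

Lemma inD_mono (g : {perm pt n m}) (y : 'cV[C]_n) : g \in G ->
  inD (mono zeta g *m y) = inD y.
Proof.
move=> gG; pose s := perm (mperm_inj (Gmpn_centV gG)).
have norm_s j : `|(mono zeta g *m y) (s j) 0| = `|y j 0|.
  by rewrite permE mono_mulmxE // normrM normrX norm_zeta expr1n mul1r.
apply/forallP/forallP => Dy j; first by rewrite -norm_s; exact: Dy.
by rewrite -(permKV s j) norm_s; exact: Dy.
Qed.

Lemma act_mono (g : {perm pt n m}) (y : 'cV[C]_n) : g \in G ->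
  Defs.act zeta g (mono zeta g *m y) = y.
Proof. by move=> gG; rewrite /Defs.act mulKmx // mono_unitmx. Qed.

Lemma mono_act (g : {perm pt n m}) (y : 'cV[C]_n) : g \in G ->
  mono zeta g *m Defs.act zeta g y = y.
Proof. by move=> gG; rewrite /Defs.act mulKVmx // mono_unitmx. Qed.

Lemma theta_act (g : {perm pt n m}) (z : 'cV[C]_n) : g \in G ->
  theta m p (Defs.act zeta g z) = theta m p z.
Proof. by move=> gG; rewrite -{2}(mono_act z gG) theta_mono. Qed.

Lemma inD_act (g : {perm pt n m}) (z : 'cV[C]_n) : g \in G ->
  inD (Defs.act zeta g z) = inD z.
Proof. by move=> gG; rewrite -{2}(mono_act z gG) inD_mono. Qed.

End MonomialAction.

Section PolynomialCalculus.
Import mpoly.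
Variables (R : realType) (n : nat).
Local Notation C := R[i].

Lemma iter_Mop (phi : 'cV[C]_n -> C) k f z : iter k (Mop phi) f z = phi z ^+ k * f z.
Proof. by elim: k => [|k IH] /=; rewrite ?mul1r // /Mop IH exprS mulrA. Qed.

Lemma Tmon_Mop (phi : 'I_n -> 'cV[C]_n -> C) a f z :
  Tmon a (fun i => Mop (phi i)) f z = (\prod_i phi i z ^+ a i) * f z.
Proof.
rewrite /Tmon -big_enum /=; elim: (enum 'I_n) => [|i s IH] /=.
  by rewrite big_nil mul1r.
by rewrite iter_Mop IH big_cons mulrA.
Qed.

Lemma polyop_Mop (phi : 'I_n -> 'cV[C]_n -> C) q f z :
  polyop q (fun i => Mop (phi i)) f z = meval (phi^~ z) q * f z.
Proof.
rewrite /polyop mevalE big_distrl /=; apply: eq_bigr => a _.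
by rewrite Tmon_Mop mulrA.
Qed.

Variables (m p : nat).

Definition theta_mpoly (i : 'I_n) : {mpoly C[n]} :=
  if (i.+1 < n)%N then \sum_(A : {set 'I_n} | #|A| == i.+1) \prod_(j in A) 'X_j ^+ m
  else (\prod_(j < n) 'X_j) ^+ (m %/ p).

Lemma meval_theta_mpoly z i : meval (coords z) (theta_mpoly i) = theta m p z i.
Proof.
rewrite /theta_mpoly /theta /Defs.esym; case: ifP => _.
  rewrite rmorph_sum; apply: eq_bigr => A _; rewrite rmorph_prod.
  by apply: eq_bigr => j _; rewrite rmorphXn /= mevalXU.
rewrite rmorphXn rmorph_prod /=; congr (_ ^+ _); apply: eq_bigr => j _.
by rewrite mevalXU.
Qed.

Definition comp_theta (q : {mpoly C[n]}) : {mpoly C[n]} :=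
  q \mPo [tuple theta_mpoly i | i < n].

Lemma meval_comp_theta z q : meval (coords z) (comp_theta q) = meval (theta m p z) q.
Proof.
rewrite /comp_theta comp_mpoly_meval; apply: meval_eq => i.
by rewrite tnth_mktuple meval_theta_mpoly.
Qed.

Lemma polyop_Mtheta q f z :
  polyop q (@Mtheta R m p n) f z = meval (theta m p z) q * f z.
Proof. exact: (polyop_Mop (fun i z => theta m p z i)). Qed.

Lemma polyop_Mz q f z : polyop q (@Mz R n) f z = meval (coords z) q * f z.
Proof. exact: (polyop_Mop (fun i z => z i 0)). Qed.

Lemma polyop_Mtheta_comp q : polyop q (@Mtheta R m p n) = polyop (comp_theta q) (@Mz R n).
Proof.
by apply/funext => f; apply/funext => z; rewrite polyop_Mtheta polyop_Mz meval_comp_theta.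
Qed.

End PolynomialCalculus.

Section Estimates.
Variable R : realType.
Local Notation C := R[i].

Lemma sqr_addC_le (a b : C) :
  (a + b) * (a + b)^* <= 2%:R * (a * a^*) + 2%:R * (b * b^*).
Proof.
rewrite -subr_ge0 (_ : _ - _ = (a - b) * (a - b)^*) ?mul_conjC_ge0 //.
by rewrite !rmorphD !rmorphN /=; ring.
Qed.

Lemma eq0_of_sqr_small (d : C) : (forall e : R, 0 < e -> d * d^* <= (e%:C)%C) -> d = 0.
Proof.
move=> small; apply/eqP; rewrite -mul_conjC_eq0.
have dd_real : d * d^* \is Num.real by rewrite ger0_real ?mul_conjC_ge0.
rewrite -(RRe_real dd_real) (_ : complex.Re _ = 0) ?rmorph0 //.
apply/eqP; rewrite eq_le -ler0c (RRe_real dd_real) mul_conjC_ge0 andbT.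
apply/ler_addgt0Pr => e e_gt0; rewrite add0r -lecR (RRe_real dd_real).
exact: small.
Qed.

Lemma inv_succ_le (c : R) : 0 < c -> exists N, forall k, (N <= k)%N -> k.+1%:R^-1 <= c.
Proof.
move=> c_gt0; exists (Num.Def.archi_bound c^-1) => k le_Nk.
have cV_lt : c^-1 < (Num.Def.archi_bound c^-1)%:R by rewrite archi_boundP // invr_ge0 ltW.
rewrite -[c]invrK lef_pV2 ?posrE ?invr_gt0 ?ltr0Sn //.
by apply: (le_trans (ltW cV_lt)); rewrite ler_nat leqW.
Qed.

End Estimates.

Section HilbertModule.
Variables (R : realType) (n : nat).
Local Notation C := R[i].
Local Notation fn := ('cV[C]_n -> C).
Variables (H : fn -> Prop) (ip : fn -> fn -> C) (K : 'cV[C]_n -> 'cV[C]_n -> C).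
Hypothesis HA : analytic_hilbert_module H ip K.

Lemma H_lin a b f g : H f -> H g -> H (fun z => a * f z + b * g z).
Proof. by move=> Hf Hg; apply: (ahm_add HA); apply: (ahm_scale HA). Qed.

Lemma fsub_lin (f g : fn) : fsub f g = fun z => 1 * f z + (-1) * g z.
Proof. by apply/funext => z; rewrite /fsub mul1r mulN1r. Qed.

Lemma H_sub f g : H f -> H g -> H (fsub f g).
Proof. by rewrite fsub_lin; exact: H_lin. Qed.

Lemma H_sum (I : Type) (r : seq I) (P : pred I) (F : I -> fn) :
  (forall i, P i -> H (F i)) -> H (fun z => \sum_(i <- r | P i) F i z).
Proof.
move=> HF; elim: r => [|x r IH].
  by under [fun z => _]funext => z do rewrite big_nil; exact: (ahm_0 HA).
case Px: (P x); under [fun z => _]funext => z do rewrite big_cons Px.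
  exact: (ahm_add HA (HF x Px) IH).
exact: IH.
Qed.

Lemma ip0l h : H h -> ip (fun _ => 0) h = 0.
Proof.
move=> Hh; have := ahm_ip_lin HA 1 (ahm_0 HA) (ahm_0 HA) Hh.
have -> : (fun z => 1 * 0 + 0) = (fun _ => 0) :> fn.
  by apply/funext => z; rewrite mulr0 addr0.
by rewrite mul1r => /eqP; rewrite -subr_eq0 opprD addrA subrr add0r oppr_eq0 => /eqP.
Qed.

Lemma ip0r h : H h -> ip h (fun _ => 0) = 0.
Proof. by move=> Hh; rewrite (ahm_ip_herm HA (ahm_0 HA) Hh) ip0l ?conjC0. Qed.

Lemma ip_linl a b f g h : H f -> H g -> H h ->
  ip (fun z => a * f z + b * g z) h = a * ip f h + b * ip g h.
Proof.
move=> Hf Hg Hh; rewrite (ahm_ip_lin HA) //; last exact: (ahm_scale HA).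
have -> : (fun z => b * g z) = fun z => b * g z + 0 by apply/funext => z; rewrite addr0.
by rewrite (ahm_ip_lin HA) ?ip0l ?addr0 //; exact: (ahm_0 HA).
Qed.

Lemma ip_linr a b f g h : H f -> H g -> H h ->
  ip h (fun z => a * f z + b * g z) = a^* * ip h f + b^* * ip h g.
Proof.
move=> Hf Hg Hh; rewrite (ahm_ip_herm HA (H_lin a b Hf Hg) Hh) ip_linl //.
by rewrite rmorphD !rmorphM /= -(ahm_ip_herm HA Hf Hh) -(ahm_ip_herm HA Hg Hh).
Qed.

Lemma ip_lin_expand a b f g : H f -> H g ->
  ip (fun z => a * f z + b * g z) (fun z => a * f z + b * g z) =
  a * a^* * ip f f + a * b^* * ip f g + b * a^* * ip g f + b * b^* * ip g g.
Proof.
by move=> Hf Hg; rewrite ip_linl ?ip_linr //; [ring | exact: H_lin].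
Qed.

Lemma ip_ge0 f : H f -> 0 <= ip f f.
Proof. exact: (ahm_ip_pos HA). Qed.

Lemma ip_conj f : H f -> (ip f f)^* = ip f f.
Proof. by move=> Hf; rewrite -(ahm_ip_herm HA Hf Hf). Qed.

Lemma ip_sqr_le_of_line_dist (f v : fn) (c : C) : H f -> H v ->
  (forall t, ip f f - c <= ip (fun z => 1 * f z + t * v z) (fun z => 1 * f z + t * v z)) ->
  ip f v * (ip f v)^* <= c * ip v v.
Proof.
move=> Hf Hv dist_ge; have [vv0|vv_neq0] := eqVneq (ip v v) 0.
  have -> : v = fun _ => 0 by apply/funext => z; exact: (ahm_ip_def HA Hv vv0).
  by rewrite ip0r // mul0r ip0l ?mulr0 //; exact: (ahm_0 HA).
have vv_gt0 : 0 < ip v v by rewrite lt0r vv_neq0 ip_ge0.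
have := dist_ge (- (ip f v / ip v v)).
rewrite ip_lin_expand // rmorph1 rmorphN fmorph_div /= ip_conj // (ahm_ip_herm HA Hf Hv).
set b := ip f v; set d := ip v v in vv_neq0 vv_gt0 *.
rewrite (_ : _ * _ * ip f f + _ + _ + _ = ip f f - b * b^* / d); last by field.
by rewrite lerD2l lerN2 ler_pdivrMr.
Qed.

Lemma ip_CauchySchwarz f v : H f -> H v -> ip f v * (ip f v)^* <= ip f f * ip v v.
Proof.
move=> Hf Hv; apply: ip_sqr_le_of_line_dist => // t.
by rewrite subrr ip_ge0 //; exact: H_lin.
Qed.

Lemma parallelogram_mid f g h : H f -> H g -> (forall z, 2%:R * h z = f z + g z) ->
  ip (fsub f g) (fsub f g) = 2%:R * ip f f + 2%:R * ip g g - 4%:R * ip h h.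
Proof.
move=> Hf Hg hE; have -> : h = fun z => 2%:R^-1 * f z + 2%:R^-1 * g z.
  by apply/funext => z; rewrite -mulrDr -hE mulKf ?pnatr_eq0.
rewrite fsub_lin !ip_lin_expand // rmorph1 rmorphN1 fmorphV /= conjC_nat.
by field.
Qed.

Lemma ip_realE f : H f -> ip f f = ((complex.Re (ip f f))%:C)%C.
Proof. by move=> Hf; rewrite RRe_real // ger0_real // ip_ge0. Qed.

Lemma nrm_ltE f (r : C) : H f -> 0 <= r -> (nrm ip f < r) = (ip f f < r ^+ 2).
Proof.
move=> Hf r_ge0; rewrite /nrm -{1}(sqrCK r_ge0) ltr_sqrtC // nnegrE ?exprn_ge0 //.
exact: ip_ge0.
Qed.

(* Norm convergence implies pointwise convergence, as |f(z)|^2 <= |f|^2 K(z, z). *)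
Lemma cvg_eval (v : nat -> fn) y z (e : R) : (forall k, H (v k)) -> H y ->
  (forall eps : C, 0 < eps -> exists N, forall k, (N <= k)%N -> nrm ip (fsub (v k) y) < eps) ->
  inD z -> 0 < e ->
  exists N, forall k, (N <= k)%N -> (v k z - y z) * (v k z - y z)^* <= (e%:C)%C.
Proof.
move=> Hv Hy v_cvg Dz e_gt0; have Hkz := ahm_kern HA Dz.
set A := complex.Re (ip (kern K z) (kern K z)).
have A_ge0 : 0 <= A by rewrite -ler0c -ip_realE ?ip_ge0.
have c_gt0 : 0 < e / (A + 1) by rewrite divr_gt0 // ltr_wpDl.
have [|N hN] := v_cvg ((Num.sqrt (e / (A + 1)))%:C)%C.
  by rewrite -[0](rmorph0 (real_complex R)) ltcR sqrtr_gt0.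
exists N => k le_Nk; have HF := H_sub (Hv k) Hy.
have FF : ip (fsub (v k) y) (fsub (v k) y) <= ((e / (A + 1))%:C)%C.
  have := hN k le_Nk; rewrite nrm_ltE ?ler0c ?sqrtr_ge0 // -rmorphXn /=.
  by rewrite sqr_sqrtr ?(ltW c_gt0) //; exact: ltW.
rewrite -[v k z - y z]/(fsub (v k) y z) -(ahm_repr HA Dz HF).
apply: le_trans (ip_CauchySchwarz HF Hkz) _; rewrite [ip (kern K z) _]ip_realE //.
apply: le_trans (ler_wpM2r _ FF) _; first by rewrite ler0c.
rewrite -rmorphM lecR /= -/A mulrAC ler_pdivrMr ?ltr_wpDl //.
by rewrite mulrDr mulr1 lerDl ltW.
Qed.

End HilbertModule.

Section KernelCombinations.
Variables (R : realType) (n : nat).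
Local Notation C := R[i].
Local Notation fn := ('cV[C]_n -> C).
Variables (H : fn -> Prop) (ip : fn -> fn -> C) (K : 'cV[C]_n -> 'cV[C]_n -> C).
Hypothesis HA : analytic_hilbert_module H ip K.

Definition kcomb (L : seq (C * 'cV[C]_n)) : fn :=
  fun z => \sum_(x <- L) x.1 * kern K x.2 z.

Definition inD_all (L : seq (C * 'cV[C]_n)) : bool := all (fun x => inD x.2) L.

Lemma kcomb_nil : kcomb [::] = fun _ => 0.
Proof. by apply/funext => z; rewrite /kcomb big_nil. Qed.

Lemma kcomb_cons x L : kcomb (x :: L) = fun z => x.1 * kern K x.2 z + 1 * kcomb L z.
Proof. by apply/funext => z; rewrite /kcomb big_cons mul1r. Qed.

Lemma kcomb_cat A B : kcomb (A ++ B) = fun z => kcomb A z + kcomb B z.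
Proof. by apply/funext => z; rewrite /kcomb big_cat. Qed.

Lemma kcomb_scale a L : kcomb [seq (a * x.1, x.2) | x <- L] = fun z => a * kcomb L z.
Proof.
apply/funext => z; rewrite /kcomb big_map big_distrr /=.
by apply: eq_bigr => x _; rewrite mulrA.
Qed.

Lemma fsub_kcomb A B : fsub (kcomb A) (kcomb B) = kcomb (A ++ [seq (-1 * x.1, x.2) | x <- B]).
Proof. by rewrite kcomb_cat kcomb_scale; apply/funext => z; rewrite /fsub mulN1r. Qed.

Lemma inD_all_sub A B :
  inD_all (A ++ [seq (-1 * x.1, x.2) | x <- B]) = inD_all A && inD_all B.
Proof. by rewrite /inD_all all_cat all_map. Qed.

Lemma H_kcomb L : inD_all L -> H (kcomb L).
Proof.
elim: L => [_|x L IH] /=; first by rewrite kcomb_nil; exact: (ahm_0 HA).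
by case/andP => Dx DL; rewrite kcomb_cons; exact: (H_lin HA _ _ (ahm_kern HA Dx) (IH DL)).
Qed.

Lemma ip_kcomb L f : inD_all L -> H f -> ip (kcomb L) f = \sum_(x <- L) x.1 * (f x.2)^*.
Proof.
move=> + Hf; elim: L => [|x L IH] /=; first by rewrite kcomb_nil big_nil (ip0l HA).
case/andP => Dx DL; have HKx := ahm_kern HA Dx.
rewrite kcomb_cons (ip_linl HA) //; last exact: H_kcomb.
rewrite IH // big_cons mul1r.
by rewrite (ahm_ip_herm HA Hf HKx) (ahm_repr HA Dx Hf).
Qed.

Section Transport.
Variables (al be : 'cV[C]_n -> 'cV[C]_n).
Hypotheses (al_be : forall w, al (be w) = w) (inD_al : forall z, inD (al z) = inD z)
  (inD_be : forall w, inD (be w) = inD w)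
  (K_al : forall z w, inD z -> inD w -> K (al z) (al w) = K z w).

Lemma kcomb_comp L : inD_all L -> kcomb L \o al = kcomb [seq (x.1, be x.2) | x <- L].
Proof.
move=> DL; apply/funext => z; rewrite /kcomb big_map /= !big_seq.
apply: eq_bigr => x xL /=; congr (_ * _); rewrite /kern inD_al; case: ifP => // Dz.
by rewrite -{1}(al_be x.2) K_al // inD_be (allP DL x xL).
Qed.

Lemma inD_all_comp L : inD_all [seq (x.1, be x.2) | x <- L] = inD_all L.
Proof. by rewrite /inD_all all_map; apply: eq_all => x /=; rewrite inD_be. Qed.

Lemma H_kcomb_comp L : inD_all L -> H (kcomb L \o al).
Proof. by move=> DL; rewrite kcomb_comp //; apply: H_kcomb; rewrite inD_all_comp. Qed.

Lemma ip_kcomb_comp L : inD_all L ->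
  ip (kcomb L \o al) (kcomb L \o al) = ip (kcomb L) (kcomb L).
Proof.
move=> DL; have HL := H_kcomb DL; have HLal := H_kcomb_comp DL.
rewrite {1}kcomb_comp // ip_kcomb ?inD_all_comp // ip_kcomb // big_map.
by apply: eq_bigr => x _ /=; rewrite al_be.
Qed.

End Transport.
End KernelCombinations.

Section BestApproximation.
Variables (R : realType) (n : nat).
Local Notation C := R[i].
Local Notation fn := ('cV[C]_n -> C).
Variables (H : fn -> Prop) (ip : fn -> fn -> C) (K : 'cV[C]_n -> 'cV[C]_n -> C).
Hypothesis HA : analytic_hilbert_module H ip K.
Variable u : fn.
Hypothesis Hu : H u.

Definition resid L := fsub u (kcomb K L).

Definition sqdist L : R := complex.Re (ip (resid L) (resid L)).

Definition sqdist_inf : R := reals.inf (fun r => exists2 L, inD_all L & r = sqdist L).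

Definition near_best_seq (Ls : nat -> seq (C * 'cV[C]_n)) : Prop :=
  forall k, inD_all (Ls k) /\ sqdist (Ls k) < sqdist_inf + k.+1%:R^-1.

Lemma H_resid L : inD_all L -> H (resid L).
Proof. by move=> DL; apply: (H_sub HA Hu); exact: (H_kcomb HA). Qed.

Lemma ip_resid L : inD_all L -> ip (resid L) (resid L) = ((sqdist L)%:C)%C.
Proof. by move=> DL; rewrite (ip_realE HA) //; exact: H_resid. Qed.

Lemma sqdist_ge0 L : inD_all L -> 0 <= sqdist L.
Proof. by move=> DL; rewrite -ler0c -ip_resid //; apply: (ip_ge0 HA); exact: H_resid. Qed.

Lemma has_inf_sqdist : classical_sets.has_inf (fun r => exists2 L, inD_all L & r = sqdist L).
Proof.
split; first by exists (sqdist [::]), [::].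
by exists 0 => r [L DL ->]; exact: sqdist_ge0.
Qed.

Lemma sqdist_inf_le L : inD_all L -> sqdist_inf <= sqdist L.
Proof. by move=> DL; apply: (reals.ge_inf has_inf_sqdist.2); exists L. Qed.

Lemma exists_near_best_seq : exists Ls, near_best_seq Ls.
Proof.
have near k : exists L, inD_all L /\ sqdist L < sqdist_inf + k.+1%:R^-1.
  have eps_gt0 : 0 < k.+1%:R^-1 :> R by rewrite invr_gt0 ltr0Sn.
  have [_ [L DL ->] lt_inf] := reals.inf_adherent eps_gt0 has_inf_sqdist.
  by exists L.
by have [Ls LsP] := choice near; exists Ls.
Qed.

Lemma resid_cons t w L : resid ((t, w) :: L) = fun z => 1 * resid L z + (- t) * kern K w z.
Proof. by apply/funext => z; rewrite /resid /fsub kcomb_cons /=; ring. Qed.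

(* Near-optimality of L: adding any multiple of a kernel function cannot
   lower the distance to u by more than e. *)
Lemma near_best_resid_le L (e : R) w : inD_all L -> sqdist L <= sqdist_inf + e -> inD w ->
  resid L w * (resid L w)^* <= (e%:C)%C * ip (kern K w) (kern K w).
Proof.
move=> DL near_L Dw; have Hw := ahm_kern HA Dw.
rewrite -(ahm_repr HA Dw (H_resid DL)).
apply: (ip_sqr_le_of_line_dist HA (H_resid DL) Hw) => t.
have DtL : inD_all ((- t, w) :: L) by rewrite /= Dw.
rewrite -(opprK t) -resid_cons !ip_resid // -rmorphB lecR.
by have := sqdist_inf_le DtL; lra.
Qed.

Lemma near_best_kcomb_close L1 L2 (e1 e2 : R) : inD_all L1 -> inD_all L2 ->
  sqdist L1 <= sqdist_inf + e1 -> sqdist L2 <= sqdist_inf + e2 ->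
  ip (fsub (kcomb K L1) (kcomb K L2)) (fsub (kcomb K L1) (kcomb K L2))
    <= ((2%:R * e1 + 2%:R * e2)%:C)%C.
Proof.
move=> DL1 DL2 near1 near2.
pose Lm := [seq (2%:R^-1 * x.1, x.2) | x <- L1 ++ L2].
have DLm : inD_all Lm by rewrite /inD_all all_map all_cat; apply/andP.
have -> : fsub (kcomb K L1) (kcomb K L2) = fsub (resid L2) (resid L1).
  by apply/funext => z; rewrite /resid /fsub; ring.
have mid z : 2%:R * resid Lm z = resid L2 z + resid L1 z.
  by rewrite /resid /fsub kcomb_scale kcomb_cat mulrBr mulrA divff ?pnatr_eq0 //; ring.
rewrite (parallelogram_mid HA (H_resid DL2) (H_resid DL1) mid) !ip_resid //.
rewrite -!(rmorph_nat (real_complex R)) -!rmorphM -rmorphD -rmorphB lecR.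
by have := sqdist_inf_le DLm; lra.
Qed.

Lemma near_best_seq_resid_small Ls w (e : R) : near_best_seq Ls -> inD w -> 0 < e ->
  exists N, forall k, (N <= k)%N -> resid (Ls k) w * (resid (Ls k) w)^* <= (e%:C)%C.
Proof.
move=> LsP Dw e_gt0; have Hw := ahm_kern HA Dw.
set B := complex.Re (ip (kern K w) (kern K w)).
have B_ge0 : 0 <= B by rewrite -ler0c -(ip_realE HA Hw) (ip_ge0 HA Hw).
have [N hN] := inv_succ_le (divr_gt0 e_gt0 (ltr_wpDl B_ge0 ltr01)).
exists N => k le_Nk; have [DL near_L] := LsP k.
apply: le_trans (near_best_resid_le DL (ltW near_L) Dw) _.
rewrite (ip_realE HA Hw) -/B -rmorphM lecR.
apply: le_trans (ler_wpM2r B_ge0 (hN k le_Nk)) _.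
by rewrite mulrAC ler_pdivrMr ?ltr_wpDl // mulrDr mulr1 lerDl ltW.
Qed.

End BestApproximation.

Section CompositionInvariance.
Variables (R : realType) (n : nat).
Local Notation C := R[i].
Local Notation fn := ('cV[C]_n -> C).
Variables (H : fn -> Prop) (ip : fn -> fn -> C) (K : 'cV[C]_n -> 'cV[C]_n -> C).
Hypothesis HA : analytic_hilbert_module H ip K.
Variables (al be : 'cV[C]_n -> 'cV[C]_n).
Hypotheses (al_be : forall w, al (be w) = w) (inD_al : forall z, inD (al z) = inD z)
  (inD_be : forall w, inD (be w) = inD w)
  (K_al : forall z w, inD z -> inD w -> K (al z) (al w) = K z w).

Lemma near_best_comp_cauchy u Ls : H u -> near_best_seq ip K u Ls ->
  forall eps : C, 0 < eps -> exists N, forall k l, (N <= k)%N -> (N <= l)%N ->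
    nrm ip (fsub (kcomb K (Ls k) \o al) (kcomb K (Ls l) \o al)) < eps.
Proof.
move=> Hu LsP eps eps_gt0; set r := complex.Re eps.
have eps_r : eps = (r%:C)%C by rewrite RRe_real // gtr0_real.
have r_gt0 : 0 < r by rewrite -ltcR rmorph0 -eps_r.
have r2_gt0 : 0 < r ^+ 2 by rewrite exprn_gt0.
have c_gt0 : 0 < r ^+ 2 / 8%:R by rewrite divr_gt0 ?ltr0n.
have [N hN] := inv_succ_le c_gt0.
exists N => k l le_Nk le_Nl; have [Dk near_k] := LsP k; have [Dl near_l] := LsP l.
have Dkl : inD_all (Ls k ++ [seq (-1 * x.1, x.2) | x <- Ls l]) by rewrite inD_all_sub Dk.
rewrite -[fsub _ _]/(fsub (kcomb K (Ls k)) (kcomb K (Ls l)) \o al) fsub_kcomb.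
rewrite (nrm_ltE HA (H_kcomb_comp HA al_be inD_al inD_be K_al Dkl)) eps_r ?ler0c ?ltW //.
rewrite (ip_kcomb_comp HA al_be inD_al inD_be K_al) // -fsub_kcomb.
apply: le_lt_trans (near_best_kcomb_close HA Hu Dk Dl (ltW near_k) (ltW near_l)) _.
rewrite -rmorphXn ltcR; have := hN k le_Nk; have := hN l le_Nl.
set a := k.+1%:R^-1; set b := l.+1%:R^-1; lra.
Qed.

Lemma H_comp u : H u -> H (u \o al).
Proof.
move=> Hu; have [Ls LsP] := exists_near_best_seq HA Hu.
pose v k := kcomb K (Ls k) \o al.
have Hv k : H (v k).
  by apply: (H_kcomb_comp HA al_be inD_al inD_be K_al); have [] := LsP k.
have [y Hy v_cvg] := ahm_complete HA Hv (near_best_comp_cauchy Hu LsP).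
suff -> : u \o al = y by [].
apply/funext => z; case Dz: (inD z); last first.
  by rewrite /= (ahm_supp HA Hu) ?inD_al ?Dz // (ahm_supp HA Hy) ?Dz.
apply/eqP; rewrite -subr_eq0; apply/eqP/eq0_of_sqr_small => e e_gt0.
have e4_gt0 : 0 < e / 4%:R by rewrite divr_gt0.
have [N1 resid_small] := near_best_seq_resid_small HA Hu LsP (etrans (inD_al z) Dz) e4_gt0.
have [N2 v_close] := cvg_eval HA Hv Hy v_cvg Dz e4_gt0.
set k := maxn N1 N2.
have -> : (u \o al) z - y z = resid K u (Ls k) (al z) + (v k z - y z).
  by rewrite /resid /fsub /v /=; ring.
apply: le_trans (sqr_addC_le _ _) _.
apply: le_trans (lerD (ler_wpM2l _ (resid_small k (leq_maxl _ _)))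
                      (ler_wpM2l _ (v_close k (leq_maxr _ _)))) _; rewrite ?ler0n //.
rewrite -(rmorph_nat (real_complex R)) -!rmorphM -rmorphD lecR; lra.
Qed.

End CompositionInvariance.

Section ThetaContraction.
Variables (R : realType) (m p n : nat) (zeta : R[i]).
Hypotheses (m_gt0 : (0 < m)%N) (p_dvd_m : (p %| m)%N)
  (zeta_prim : m.-primitive_root zeta).
Local Notation C := R[i].
Local Notation fn := ('cV[C]_n -> C).
Local Notation G := (Gmpn m p n).
Variables (H : fn -> Prop) (ip : fn -> fn -> C) (K : 'cV[C]_n -> 'cV[C]_n -> C).
Hypotheses (HA : analytic_hilbert_module H ip K) (HK : G_invariant_kernel m p zeta K).

Lemma H_act g u : g \in G -> H u -> H (u \o Defs.act zeta g).
Proof.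
move=> gG; apply: (H_comp HA (be := fun w => mono zeta g *m w)) => [w|z|w|z w Dz Dw].
- exact: (act_mono m_gt0 p_dvd_m zeta_prim).
- exact: (inD_act m_gt0 p_dvd_m zeta_prim).
- exact: (inD_mono m_gt0 p_dvd_m zeta_prim).
- exact: HK.
Qed.

Lemma H_Pproj d (rG : mx_representation C G d) i j f : H f -> H (Pproj zeta rG i j f).
Proof.
move=> Hf; apply: (ahm_scale HA); apply: (H_sum HA) => g gG.
by apply: (ahm_scale HA); apply: H_act; rewrite ?groupV.
Qed.

Lemma Mtheta_Pproj d (rG : mx_representation C G d) i j k f :
  Mtheta m p k (Pproj zeta rG i j f) = Pproj zeta rG i j (Mtheta m p k f).
Proof.
apply/funext => z; rewrite /Mtheta /Mop /Pproj mulrCA big_distrr /=; congr (_ * _).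
apply: eq_bigr => g gG; rewrite (theta_act m_gt0 p_dvd_m zeta_prim) ?groupV //; exact: mulrCA.
Qed.

Hypothesis HvN : forall q : mpoly.mpoly n C, G_invariant_poly m p zeta q ->
  forall c : C, (forall w, inDbar w -> `|mpoly.meval (coords w) q| <= c) ->
  forall f, H f -> nrm ip (polyop q (@Mz R n) f) <= c * nrm ip f.

Lemma Theta_contraction_Prange d (rG : mx_representation C G d) i :
  Theta_contraction m p ip (Prange zeta H rG i i) (@Mtheta R m p n).
Proof.
split.
- move=> k _ [f Hf ->]; exists (Mtheta m p k f); last exact: Mtheta_Pproj.
  have -> : Mtheta m p k f = polymul (@theta_mpoly R n m p k) f.
    by apply/funext => z; rewrite /polymul meval_theta_mpoly.
  exact: (ahm_mul HA).
- by move=> k l f _; apply/funext => z; rewrite /Mtheta /Mop mulrCA.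
- move=> q c q_le _ [f Hf ->]; rewrite polyop_Mtheta_comp.
  apply: HvN; last exact: H_Pproj.
    by move=> g gG z; rewrite !meval_comp_theta (theta_act m_gt0 p_dvd_m zeta_prim).
  by move=> w Dw; rewrite meval_comp_theta; exact: q_le.
Qed.

End ThetaContraction.

Theorem theorem4p5 (R : realType) (m p n : nat) (zeta : R[i])
  (m_gt0 : (0 < m)%N) (p_gt0 : (0 < p)%N) (p_dvd_m : (p %| m)%N) (n_gt1 : (1 < n)%N)
  (zeta_prim : m.-primitive_root zeta)
  (H : ('cV[R[i]]_n -> R[i]) -> Prop)
  (ip : ('cV[R[i]]_n -> R[i]) -> ('cV[R[i]]_n -> R[i]) -> R[i])
  (K : 'cV[R[i]]_n -> 'cV[R[i]]_n -> R[i])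
  (HA : analytic_hilbert_module H ip K)
  (HK : G_invariant_kernel m p zeta K)
  (Hcontr : forall (i : 'I_n) f, H f -> nrm ip (Mz i f) <= nrm ip f)
  (HvN : forall (q : mpoly.mpoly n R[i]), G_invariant_poly m p zeta q ->
     forall c : R[i], (forall w, inDbar w -> `|mpoly.meval (coords w) q| <= c) ->
     forall f, H f -> nrm ip (polyop q (@Mz R n) f) <= c * nrm ip f) :
  (* (1) *)
  (forall (d : nat) (rG : mx_representation R[i] (Gmpn m p n) d),
     mx_irreducible rG -> unitary_rep rG ->
     forall i : 'I_d,
       Theta_contraction m p ip (Prange zeta H rG i i) (@Mtheta R m p n))
  /\
  (* (2): for a complete system (pi_k)_{k < N} of representatives of the
     classes in \hat G, the sum_k deg(pi_k) tuples indexed by (k, i),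
     i < deg pi_k, are all Theta_n-contractions *)
  (forall (N : nat) (d : 'I_N -> nat)
          (rG : forall k : 'I_N, mx_representation R[i] (Gmpn m p n) (d k)),
     (forall k, mx_irreducible (rG k)) ->
     (forall k, unitary_rep (rG k)) ->
     (forall k l, mx_rsim (rG k) (rG l) -> k = l) ->
     (forall (d' : nat) (r : mx_representation R[i] (Gmpn m p n) d'),
        mx_irreducible r -> exists k, mx_rsim r (rG k)) ->
     forall (k : 'I_N) (i : 'I_(d k)),
       Theta_contraction m p ip (Prange zeta H (rG k) i i) (@Mtheta R m p n)).
Proof.
have tc := Theta_contraction_Prange m_gt0 p_dvd_m zeta_prim HA HK HvN.
by split=> [d rG _ _ i | N d rG _ _ _ _ k i]; exact: tc.
Qed.
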